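(* Let $\boldsymbol X=A\times_{\max}\boldsymbol Z$ be a recursive max-linear model on a DAG $\mathcal D=(V,E)$ satisfying Assumptions A, fix any $a>1$, and let $O\subseteq V$ satisfy $\mathrm{An}(O)\cap(V\setminus O)=\emptyset$. Then $j\in V\setminus O$ satisfies $\mathrm{an}(j)\cap(V\setminus O)=\emptyset$ if and only if $$\sum_{\ell\in (V\setminus O)\setminus\{j\}}\big(a_{i\ell}^2\vee a^2a_{j\ell}^2-a_{i\ell}^2\vee a_{j\ell}^2\big)=(a^2-1)\sum_{\ell\in (V\setminus O)\setminus\{j\}}a_{j\ell}^2\quad\text{for all } i\in V\setminus(O\cup\{j\}).$$
   Context: Let $\mathcal D=(V,E)$ be a directed acyclic graph with $V=\{1,\dots,d\}$; $\mathrm{pa}(i)$, $\mathrm{an}(i)$ denote parents and ancestors (nodes with a directed path to $i$) of $i$, $\mathrm{An}(i)=\mathrm{an}(i)\cup\{i\}$, $\mathrm{An}(U)=\bigcup_{u\in U}\mathrm{An}(u)$; $\vee$ denotes maximum. A recursive max-linear model (RMLM) on $\mathcal D$ is the unique solution of $X_i=\bigvee_{k\in\mathrm{pa}(i)}c_{ik}X_k\vee c_{ii}Z_i$, $i\in V$, with edge weights $c_{ik}>0$ ($k\in \mathrm{pa}(i)$), $c_{ii}>0$; it equals $X_i=(A\times_{\max}\boldsymbol Z)_i=\bigvee_{j\in V}a_{ij}Z_j$ where $a_{ii}=c_{ii}$, $a_{ij}$ for $j\in\mathrm{an}(i)$ is the maximum over all directed paths $j=\ell_0\to\ell_1\to\dots\to\ell_m=i$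 of $c_{jj}c_{\ell_1\ell_0}\cdots c_{\ell_m\ell_{m-1}}$, and $a_{ij}=0$ for $j\notin\mathrm{An}(i)$. Assumptions A: (A1) $Z_1,\dots,Z_d$ are independent, nonnegative, atom-free, with $n\,\mathbb P(n^{-1/2}Z_i>z)\to z^{-2}$ as $n\to\infty$ for all $z>0$; (A2) the norm is the Euclidean norm; (A3) $A$ is standardised, i.e. each row is divided by its Euclidean norm so that $\sum_{j\in V}a_{ij}^2=1$ for all $i$ (the model is taken as $\boldsymbol X=A\times_{\max}\boldsymbol Z$ with this standardised $A$). Under these assumptions it is known that $a_{ij}>0$ iff $j\in\mathrm{An}(i)$, and $a_{jj}>a_{ij}$ for all $i\neq j$. *)

From mathcomp Require Import all_boot all_order all_algebra.
From mathcomp Require Import reals.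
Set Implicit Arguments. Unset Strict Implicit. Unset Printing Implicit Defensive.
Import Order.TTheory GRing.Theory Num.Theory.
Local Open Scope ring_scope.

(* Vertex set V = 'I_d.  The DAG is given by an edge relation E : rel 'I_d,
   with  E k i  meaning the edge k -> i, i.e. k \in pa(i). *)

Definition acyclic (d : nat) (E : rel 'I_d) : Prop :=
  forall i j : 'I_d, E i j -> ~~ connect E j i.

Definition an (d : nat) (E : rel 'I_d) (i : 'I_d) : {set 'I_d} :=
  [set j | (j != i) && connect E j i].

Definition An (d : nat) (E : rel 'I_d) (i : 'I_d) : {set 'I_d} :=
  [set j | connect E j i].

Definition AnS (d : nat) (E : rel 'I_d) (U : {set 'I_d}) : {set 'I_d} :=
  \bigcup_(u in U) An E u.

(* edge-weight product along a path x -> t_1 -> ... -> t_m: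
   c_{t1 x} * c_{t2 t1} * ... ; c i k is the weight of the edge k -> i *)
Fixpoint path_weight (R : realType) (d : nat) (c : 'I_d -> 'I_d -> R)
  (x : 'I_d) (t : seq 'I_d) : R :=
  match t with
  | [::] => 1
  | y :: t' => c y x * path_weight c y t'
  end.

(* Unstandardised max-linear coefficient a_{ij}: maximum over all directed
   paths j = l_0 -> l_1 -> ... -> l_m = i of c_jj * c_{l1 l0} ... c_{lm l(m-1)}
   (0 if there is no path).  In a DAG on d nodes every directed path has
   fewer than d edges, so the maximum ranges over paths with m < d edges. *)
Definition mlcoef (R : realType) (d : nat) (E : rel 'I_d)
  (c : 'I_d -> 'I_d -> R) (i j : 'I_d) : R :=
  \big[Num.max/0]_(m < d)
    \big[Num.max/0]_(t : m.-tuple 'I_d | path E j t && (last j t == i))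
       (c j j * path_weight c j t).

Definition stdcoef (R : realType) (d : nat) (E : rel 'I_d)
  (c : 'I_d -> 'I_d -> R) (i j : 'I_d) : R :=
  mlcoef E c i j / Num.sqrt (\sum_(l < d) mlcoef E c i l ^+ 2).

From mathcomp Require Import all_boot all_order all_algebra.
From mathcomp Require Import reals lra.
Import Order.TTheory GRing.Theory Num.Theory.
Local Open Scope ring_scope.
Set Implicit Arguments. Unset Strict Implicit.

(* If [j] has no ancestor outside [O], row [j] of [A] vanishes on [(V \ O) \ {j}]
   and both sides of the identity are [0].  Conversely, if [l] is such an
   ancestor, then [0 < a_jl < a_ll], so at [i = l] the [l]-th summand
   [a_ll^2 v a^2 a_jl^2 - a_ll^2 v a_jl^2] is strictly smaller than
   [(a^2 - 1) a_jl^2], while every summand is at most its counterpart on the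
   right; the identity thus fails at [i = l]. *)

Section MaxIncrement.
Variable R : realFieldType.

Lemma max_scale_increment_le (b x y : R) : 1 <= b -> 0 <= y ->
  Num.max x (b * y) - Num.max x y <= (b - 1) * y.
Proof.
move=> hb hy; have hby : y <= b * y by rewrite -{1}(mul1r y) ler_wpM2r.
rewrite mulrBl mul1r !maxEle; case: ifP => H1; case: ifP => H2; lra.
Qed.

Lemma max_scale_increment_lt (b x y : R) : 1 < b -> 0 < y -> y < x ->
  Num.max x (b * y) - Num.max x y < (b - 1) * y.
Proof.
move=> hb hy hyx; have hby : y < b * y by rewrite -{1}(mul1r y) ltr_pM2r.
rewrite mulrBl mul1r !maxEle; case: ifP => H1; case: ifP => H2; lra.
Qed.

Lemma sum_max_scale_increment_lt (I : finType) (S : {pred I}) (b : R)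
    (x y : I -> R) (l : I) :
  1 < b -> (forall k, 0 <= y k) -> l \in S -> 0 < y l -> y l < x l ->
  \sum_(k in S) (Num.max (x k) (b * y k) - Num.max (x k) (y k))
    < (b - 1) * \sum_(k in S) y k.
Proof.
move=> hb hy Sl hyl hxl; rewrite mulr_sumr !(bigD1 l Sl) /=.
rewrite ltr_leD ?max_scale_increment_lt //.
by apply: ler_sum => k _; rewrite max_scale_increment_le // ltW.
Qed.

End MaxIncrement.

Section AcyclicPaths.
Variables (d : nat) (E : rel 'I_d).
Hypothesis hacyc : acyclic E.

Lemma acyclic_path_uniq x p : path E x p -> uniq (x :: p).
Proof.
elim: p x => [//|y p IH] x /= /andP [Exy Hp].
have /= /andP [-> ->] := IH _ Hp; rewrite inE negb_or !andbT.
have Nyx := hacyc Exy; apply/andP; split.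
  by apply: contraNneq Nyx => <-; rewrite connect0.
by apply: contraNN Nyx => Hx; apply: (path_connect Hp); rewrite inE Hx orbT.
Qed.

Lemma acyclic_path_size x p : path E x p -> (size p < d)%N.
Proof.
move=> /acyclic_path_uniq /uniq_leq_size/(_ (fun y _ => mem_enum 'I_d y)).
by rewrite size_enum_ord.
Qed.

Lemma acyclic_connect_antisym x y : connect E x y -> connect E y x -> x = y.
Proof.
move=> Cxy /connectP [[|z p] /= Hp Hx]; first by [].
case/andP: Hp => Eyz Hp.
have Czx : connect E z x by apply/connectP; exists p.
by have := hacyc Eyz; rewrite (connect_trans Czx Cxy).
Qed.

End AcyclicPaths.

Section MaxLinearCoefficients.
Variables (R : realType) (d : nat) (E : rel 'I_d).
Hypothesis hacyc : acyclic E.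
Variable c : 'I_d -> 'I_d -> R.
Hypothesis hc_edge : forall i k : 'I_d, E k i -> 0 < c i k.
Hypothesis hc_diag : forall i : 'I_d, 0 < c i i.

Lemma path_weight_cat x t1 t2 :
  path_weight c x (t1 ++ t2) = path_weight c x t1 * path_weight c (last x t1) t2.
Proof. by elim: t1 x => [|y t IH] x /=; rewrite ?mul1r // IH mulrA. Qed.

Lemma path_weight_gt0 x t : path E x t -> 0 < path_weight c x t.
Proof.
elim: t x => [|y t IH] x /=; first by rewrite ltr01.
by case/andP=> Exy Hp; rewrite mulr_gt0 ?hc_edge ?IH.
Qed.

Lemma mlcoef_ge_path i j t : path E j t -> last j t = i ->
  c j j * path_weight c j t <= mlcoef E c i j.
Proof.
move=> Hp Hl; have Hs := acyclic_path_size hacyc Hp.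
rewrite /mlcoef; apply: (bigmax_sup (Ordinal Hs)) => //.
by apply: (bigmax_sup (in_tuple t)); rewrite /= ?Hp ?Hl ?eqxx.
Qed.

Lemma mlcoef_ge0 i j : 0 <= mlcoef E c i j.
Proof. exact: bigmax_ge_id. Qed.

Lemma mlcoef_eq0_or_path i j : mlcoef E c i j = 0 \/
  exists t, [/\ path E j t, last j t = i & mlcoef E c i j = c j j * path_weight c j t].
Proof.
pose Q v := v = 0 \/
  exists t, [/\ path E j t, last j t = i & v = c j j * path_weight c j t].
have Qmax x y : Q x -> Q y -> Q (Num.max x y) by rewrite maxEle; case: ifP.
apply: (big_ind Q) => // [|m _]; first by left.
apply: (big_ind Q) => // [|t /andP [Hp /eqP Hl]]; first by left.
by right; exists t.
Qed.

Lemma mlcoef_neq0_connect i j : mlcoef E c i j != 0 -> connect E j i.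
Proof.
case: (mlcoef_eq0_or_path i j) => [->|[t [Hp Hl _]]]; first by rewrite eqxx.
by move=> _; apply/connectP; exists t.
Qed.

Lemma mlcoef_gt0 i j : connect E j i -> 0 < mlcoef E c i j.
Proof.
case/connectP=> p Hp ->; apply: lt_le_trans (mlcoef_ge_path Hp erefl).
by rewrite mulr_gt0 ?path_weight_gt0.
Qed.

Lemma mlcoef_ge_diag i : c i i <= mlcoef E c i i.
Proof. by have := @mlcoef_ge_path i i [::] isT erefl; rewrite /= mulr1. Qed.

(* The product is [c_ll] times the weight of the concatenated path [k ~> l ~> j]. *)
Lemma mlcoef_mul_le j l k :
  mlcoef E c j l * mlcoef E c l k <= c l l * mlcoef E c j k.
Proof.
have c_ge0 := ltW (hc_diag _).
case: (mlcoef_eq0_or_path j l) => [->|[t2 [Hp2 Hl2 ->]]].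
  by rewrite mul0r mulr_ge0 ?mlcoef_ge0.
case: (mlcoef_eq0_or_path l k) => [->|[t1 [Hp1 Hl1 ->]]].
  by rewrite mulr0 mulr_ge0 ?mlcoef_ge0.
have := @mlcoef_ge_path j k (t1 ++ t2).
rewrite cat_path Hp1 last_cat Hl1 Hp2 Hl2 path_weight_cat Hl1 => /(_ isT erefl) Hjk.
rewrite -mulrA ler_wpM2l //; apply: le_trans _ Hjk.
by rewrite mulrC -mulrA.
Qed.

Lemma mlcoef_descendant_eq0 l j : l != j -> connect E l j -> mlcoef E c l j = 0.
Proof.
move=> Hne Clj; apply/eqP; apply: contraNT Hne => /mlcoef_neq0_connect Cjl.
by rewrite (acyclic_connect_antisym hacyc Clj Cjl).
Qed.

Definition rownorm2 i := \sum_(k < d) mlcoef E c i k ^+ 2.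

Lemma rownorm2_gt0 i : 0 < rownorm2 i.
Proof.
rewrite /rownorm2 (bigD1 i) //= ltr_pwDl ?sumr_ge0 // => [|k _].
  by rewrite exprn_gt0 // (lt_le_trans _ (mlcoef_ge_diag i)).
exact: sqr_ge0.
Qed.

Lemma stdcoef_sqr i l : stdcoef E c i l ^+ 2 = mlcoef E c i l ^+ 2 / rownorm2 i.
Proof. by rewrite /stdcoef expr_div_n sqr_sqrtr // ltW // rownorm2_gt0. Qed.

Lemma stdcoef_ge0 i l : 0 <= stdcoef E c i l.
Proof. by rewrite /stdcoef divr_ge0 ?mlcoef_ge0 ?sqrtr_ge0. Qed.

Lemma stdcoef_gt0 i l : connect E l i -> 0 < stdcoef E c i l.
Proof. by move=> Cli; rewrite /stdcoef divr_gt0 ?mlcoef_gt0 ?sqrtr_gt0 ?rownorm2_gt0. Qed.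

Lemma stdcoef_not_connect i l : ~~ connect E l i -> stdcoef E c i l = 0.
Proof.
move=> NCli; rewrite /stdcoef; apply/eqP; rewrite mulf_eq0; apply/orP; left.
by apply: contraNT NCli; exact: mlcoef_neq0_connect.
Qed.

(* Term by term via [mlcoef_mul_le]; strict at [k = j], where [mlcoef l j = 0]. *)
Lemma mlcoef_sqr_rownorm2_lt j l : l != j -> connect E l j ->
  mlcoef E c j l ^+ 2 * rownorm2 l < c l l ^+ 2 * rownorm2 j.
Proof.
move=> Hlj Clj; rewrite /rownorm2 !mulr_sumr (bigD1 j) //= [X in _ < X](bigD1 j) //=.
apply: ltr_leD.
  rewrite (mlcoef_descendant_eq0 Hlj Clj) expr0n mulr0 mulr_gt0 ?exprn_gt0 //.
  exact: lt_le_trans (mlcoef_ge_diag j).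
apply: ler_sum => k _; rewrite -!exprMn lerXn2r ?nnegrE ?mlcoef_mul_le //.
  by rewrite mulr_ge0 ?mlcoef_ge0.
by rewrite mulr_ge0 ?mlcoef_ge0 ?ltW.
Qed.

Lemma stdcoef_lt_diag j l : j != l -> stdcoef E c j l < stdcoef E c l l.
Proof.
move=> Hjl; have [Clj|NClj] := boolP (connect E l j); last first.
  by rewrite stdcoef_not_connect // stdcoef_gt0 ?connect0.
rewrite -ltr_sqr ?nnegrE ?stdcoef_ge0 // !stdcoef_sqr.
apply: lt_le_trans (_ : c l l ^+ 2 / rownorm2 l <= _).
  rewrite ltr_pdivrMr ?rownorm2_gt0 // mulrAC ltr_pdivlMr ?rownorm2_gt0 //.
  by rewrite mlcoef_sqr_rownorm2_lt // eq_sym.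
rewrite ler_pM2r ?invr_gt0 ?rownorm2_gt0 //.
by rewrite lerXn2r ?nnegrE ?mlcoef_ge_diag ?mlcoef_ge0 // ltW.
Qed.

End MaxLinearCoefficients.

Theorem corollary4p3 (R : realType) (d : nat) (E : rel 'I_d)
  (hacyc : acyclic E)
  (c : 'I_d -> 'I_d -> R)
  (hc_edge : forall i k : 'I_d, E k i -> 0 < c i k)
  (hc_diag : forall i : 'I_d, 0 < c i i)
  (a : R) (ha : 1 < a)
  (O : {set 'I_d}) (hO : AnS E O :&: ~: O = set0) :
  let A := stdcoef E c in
  forall j : 'I_d, j \in ~: O ->
    (an E j :&: ~: O = set0 <->
     (forall i : 'I_d, i \in ~: (O :|: [set j]) ->
        \sum_(l in (~: O) :\ j)
           (Num.max (A i l ^+ 2) (a ^+ 2 * A j l ^+ 2)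
              - Num.max (A i l ^+ 2) (A j l ^+ 2))
        = (a ^+ 2 - 1) * \sum_(l in (~: O) :\ j) A j l ^+ 2)).
Proof.
move=> A j _; split.
- move=> no_anc i _.
  have Aj0 l : l \in (~: O) :\ j -> A j l = 0.
    rewrite !inE => /andP [Hlj HlO]; apply: stdcoef_not_connect => //.
    by have /setP/(_ l) := no_anc; rewrite !inE Hlj HlO andbT /= => ->.
  by rewrite !big1 ?mulr0 // => l /Aj0 ->; rewrite expr0n /= ?mulr0 ?subrr.
- move=> Hsum; apply/setP => l; rewrite !inE -andbA; apply/negbTE/and3P.
  case=> Hlj Clj HlO; have := Hsum l; rewrite !inE negb_or HlO Hlj => /(_ isT).
  apply/eqP; rewrite lt_eqF // (sum_max_scale_increment_lt (l := l)) //.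
  - by rewrite exprn_egt1.
  - by move=> k; exact: sqr_ge0.
  - by rewrite !inE Hlj HlO.
  - by rewrite exprn_gt0 ?stdcoef_gt0.
  - by rewrite ltrXn2r ?stdcoef_ge0 ?stdcoef_lt_diag // eq_sym.
Qed.
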